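(* If $G$ is a finitely generated nilpotent group, then there is a polynomial $p$ such that for every $n\in\mathbb{N}$, every element of $G^{\omega,n}$ satisfies a recurrence of order $p(n)$.
   Context: $G^\omega$ is the group of all functions $f\colon\mathbb{N}\to G$ under pointwise multiplication. $f$ has period at most $n$ if there is $1\le q\le n$ with $f(t)=f(t+q)$ for all $t\ge0$. $G^{\omega,n}$ is the subgroup of $G^\omega$ generated by all elements of period at most $n$. The shift $\rho\colon G^\omega\to G^\omega$ is $(\rho(f))(t)=f(t+1)$. For a subgroup $K\le G^\omega$, $K^{(n)}$ is the smallest subgroup of $G^\omega$ containing $\rho^0(K),\rho^1(K),\ldots,\rho^n(K)$. A function $f\in G^\omega$ satisfies a recurrence of order $d\ge1$ if $\rho^d(f)\in\langle f\rangle^{(d-1)}$. *)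

From Stdlib Require Import List.
From mathcomp Require Import all_boot all_algebra.
Set Implicit Arguments. Unset Strict Implicit. Unset Printing Implicit Defensive.

Record grp := Grp {
  gcar :> Type;
  gmul : gcar -> gcar -> gcar;
  gone : gcar;
  ginv : gcar -> gcar;
  gmulA : forall x y z, gmul x (gmul y z) = gmul (gmul x y) z;
  gmul1 : forall x, gmul gone x = x;
  gmulV : forall x, gmul (ginv x) x = gone
}.

Definition is_subgrp {T : Type} (m : T -> T -> T) (e : T) (i : T -> T)
  (H : T -> Prop) : Prop :=
  H e /\ (forall x y, H x -> H y -> H (m x y)) /\ (forall x, H x -> H (i x)).

Definition gen {T : Type} (m : T -> T -> T) (e : T) (i : T -> T)
  (S : T -> Prop) : T -> Prop :=
  fun x => forall H, is_subgrp m e i H -> (forall y, S y -> H y) -> H x.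

Section G.
Variable G : grp.

Definition ggen (S : G -> Prop) := gen (@gmul G) (gone G) (@ginv G) S.

Definition finitely_generated : Prop :=
  exists s : seq G, forall x : G, ggen (fun y => In y s) x.

Definition gcomm (x y : G) : G :=
  gmul (gmul (ginv x) (ginv y)) (gmul x y).

Fixpoint lcs (k : nat) : G -> Prop :=
  match k with
  | 0 => fun _ => True
  | k.+1 => ggen (fun z => exists x y, lcs k x /\ z = gcomm x y)
  end.

Definition nilpotent : Prop := exists c, forall x, lcs c x -> x = gone G.

Definition smul (f g : nat -> G) : nat -> G := fun t => gmul (f t) (g t).
Definition sone : nat -> G := fun _ => gone G.
Definition sinv (f : nat -> G) : nat -> G := fun t => ginv (f t).

Definition sgen (S : (nat -> G) -> Prop) := gen smul sone sinv S.

Definition period_at_most (n : nat) (f : nat -> G) : Prop :=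
  exists q, (1 <= q <= n)%N /\ forall t, f t = f (t + q)%N.

Definition Gomega (n : nat) : (nat -> G) -> Prop := sgen (period_at_most n).

Definition shift (f : nat -> G) : nat -> G := fun t => f t.+1.

Definition Kup (K : (nat -> G) -> Prop) (n : nat) : (nat -> G) -> Prop :=
  sgen (fun h => exists i, (i <= n)%N /\ exists f, K f /\ h = iter i shift f).

Definition cyc (f : nat -> G) : (nat -> G) -> Prop := sgen (fun h => h = f).

Definition satisfies_recurrence (d : nat) (f : nat -> G) : Prop :=
  (1 <= d)%N /\ Kup (cyc f) d.-1 (iter d shift f).

End G.

From mathcomp Require Import all_boot all_algebra.
From mathcomp Require Import zify.
From Stdlib Require Import FunctionalExtensionality.
Set Implicit Arguments. Unset Strict Implicit. Unset Printing Implicit Defensive.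

(* Let gamma_i be the lower central series of G, with gamma_c = 1, and
   B_i = (n+1)^(2^i).  The subgroups W_j of G^omega generated by the
   gamma_i-valued sequences of period at most B_i (j <= i <= c) satisfy
   W_0 >= G^{omega,n}, W_(c+1) = 1 and [W_j, W_0] <= W_(j+1), since a
   commutator of sequences of periods p and q has period pq <= B_(i+1).
   Modulo W_(j+1), passing from a to rho^k(a) a^-1 lowers the period bound k
   of the gamma_j-part of a by one; doing this for k = B_j, ..., 1 shows that
   rho^D(a) lies in <a>^(D-1) W_(j+1) for D = 1 + B_j^2.  Composing the c+1
   steps of the filtration gives a recurrence of order
   (c+2)(1 + (n+1)^(2^(c+1))), a polynomial in n. *)

Section GroupFacts.
Variable T : grp.
Implicit Types x y : T.

Lemma gmulVr x : gmul x (ginv x) = gone T.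
Proof.
rewrite -[gmul x _]gmul1 -{1}(gmulV (ginv x)) -gmulA (gmulA (ginv x) x).
by rewrite gmulV gmul1 gmulV.
Qed.

Lemma gmul1r x : gmul x (gone T) = x.
Proof. by rewrite -(gmulV x) gmulA gmulVr gmul1. Qed.

Lemma gmulK x y : gmul (ginv x) (gmul x y) = y.
Proof. by rewrite gmulA gmulV gmul1. Qed.

Lemma gmulKV x y : gmul x (gmul (ginv x) y) = y.
Proof. by rewrite gmulA gmulVr gmul1. Qed.

Lemma ginv_uniq x y : gmul x y = gone T -> ginv x = y.
Proof. by move=> xy1; rewrite -[ginv x]gmul1r -xy1 gmulK. Qed.

Lemma ginvK x : ginv (ginv x) = x.
Proof. by apply: ginv_uniq; rewrite gmulV. Qed.

Lemma ginv1 : ginv (gone T) = gone T.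
Proof. by apply: ginv_uniq; rewrite gmul1. Qed.

Lemma ginvM x y : ginv (gmul x y) = gmul (ginv y) (ginv x).
Proof. by apply: ginv_uniq; rewrite -gmulA (gmulA y) gmulVr gmul1 gmulVr. Qed.

End GroupFacts.

Ltac gsimpl := repeat progress rewrite ?ginvM ?ginvK ?ginv1 -?gmulA
  ?gmul1 ?gmul1r ?gmulK ?gmulKV ?gmulV ?gmulVr.

Section Commutators.
Variable T : grp.
Implicit Types x y : T.

Definition gconj x y : T := gmul (ginv y) (gmul x y).

Lemma gconjE x y : gconj x y = gmul x (gcomm x y).
Proof. by rewrite /gconj /gcomm; gsimpl. Qed.

Lemma ginv_comm x y : ginv (gcomm x y) = gcomm y x.
Proof. by rewrite /gcomm; gsimpl. Qed.

Lemma gcomm1g y : gcomm (gone T) y = gone T.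
Proof. by rewrite /gcomm; gsimpl. Qed.

Lemma gcommg1 x : gcomm x (gone T) = gone T.
Proof. by rewrite /gcomm; gsimpl. Qed.

Lemma gcommMl x1 x2 y :
  gcomm (gmul x1 x2) y = gmul (gconj (gcomm x1 y) x2) (gcomm x2 y).
Proof. by rewrite /gconj /gcomm; gsimpl. Qed.

Lemma gcommMr x y1 y2 :
  gcomm x (gmul y1 y2) = gmul (gcomm x y2) (gconj (gcomm x y1) y2).
Proof. by rewrite /gconj /gcomm; gsimpl. Qed.

Lemma gcommVl x y : gcomm (ginv x) y = gconj (ginv (gcomm x y)) (ginv x).
Proof. by rewrite /gconj /gcomm; gsimpl. Qed.

Lemma gcommVr x y : gcomm x (ginv y) = gconj (ginv (gcomm x y)) (ginv y).
Proof. by rewrite /gconj /gcomm; gsimpl. Qed.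

End Commutators.

Section Morphisms.
Variables (T U : grp) (f : T -> U).
Hypothesis fM : forall x y, f (gmul x y) = gmul (f x) (f y).

Lemma gmorph1 : f (gone T) = gone U.
Proof.
have e : gmul (f (gone T)) (f (gone T)) = gmul (f (gone T)) (gone U).
  by rewrite -fM gmul1 gmul1r.
by rewrite -[f _]gmul1 -(gmulV (f (gone T))) -gmulA e gmul1r gmulV.
Qed.

Lemma gmorphV x : f (ginv x) = ginv (f x).
Proof. by apply/esym/ginv_uniq; rewrite -fM gmulVr gmorph1. Qed.

End Morphisms.

Section Generated.
Variable T : grp.
Implicit Types (S A B C H : T -> Prop) (x y : T).

Local Notation subgroup := (is_subgrp (@gmul T) (gone T) (@ginv T)).

Lemma subgroup1 : subgroup (fun x => x = gone T).
Proof. by split; [|split] => [|x y -> ->|x ->]; rewrite ?gmul1 ?ginv1. Qed.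

Lemma ggen_subgrp S : subgroup (ggen S).
Proof.
split; [|split].
- by move=> H [].
- by move=> x y hx hy H hH hS; case: (hH) => _ [hM _]; apply: hM; [apply: hx|apply: hy].
- by move=> x hx H hH hS; case: (hH) => _ [_ hV]; apply: hV; apply: hx.
Qed.

Lemma ggen1 S : ggen S (gone T).
Proof. by case: (ggen_subgrp S). Qed.

Lemma ggenM S x y : ggen S x -> ggen S y -> ggen S (gmul x y).
Proof. by case: (ggen_subgrp S) => _ [+ _]; apply. Qed.

Lemma ggenV S x : ggen S x -> ggen S (ginv x).
Proof. by case: (ggen_subgrp S) => _ [_]; apply. Qed.

Lemma mem_ggen S x : S x -> ggen S x.
Proof. by move=> Sx H _; apply. Qed.

Lemma ggen_subG S H : subgroup H -> (forall y, S y -> H y) ->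
  forall x, ggen S x -> H x.
Proof. by move=> hH hS x; apply. Qed.

Lemma ggen_ind S (P : T -> Prop) :
  P (gone T) ->
  (forall x y, ggen S x -> ggen S y -> P x -> P y -> P (gmul x y)) ->
  (forall x, ggen S x -> P x -> P (ginv x)) ->
  (forall y, S y -> P y) ->
  forall x, ggen S x -> P x.
Proof.
move=> P1 PM PV PS x Sx; suff [] : ggen S x /\ P x by [].
apply: (ggen_subG (H := fun z => ggen S z /\ P z)) Sx => [|y Sy]; last first.
  by split; [apply: mem_ggen|apply: PS].
split; [by split; [apply: ggen1|]|split].
- by move=> a b [Sa Pa] [Sb Pb]; split; [apply: ggenM|apply: PM].
- by move=> a [Sa Pa]; split; [apply: ggenV|apply: PV].
Qed.

Lemma ggenS S S' : (forall y, S y -> ggen S' y) -> forall x, ggen S x -> ggen S' x.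
Proof. by move=> hS; apply: ggen_subG => //; apply: ggen_subgrp. Qed.

Lemma ggen_comm A B C : subgroup C ->
  (forall v x, C v -> ggen A x \/ ggen B x -> C (gconj v x)) ->
  (forall a b, A a -> B b -> C (gcomm a b)) ->
  forall x, ggen A x -> forall y, ggen B y -> C (gcomm x y).
Proof.
move=> [C1 [CM CV]] Cconj AB.
apply: (ggen_ind (P := fun x => forall y, ggen B y -> C (gcomm x y))).
- by move=> y _; rewrite gcomm1g.
- move=> x1 x2 _ Ax2 P1 P2 y By; rewrite gcommMl.
  by apply: CM; [apply: Cconj; [apply: P1|left]|apply: P2].
- move=> x Ax P y By; rewrite gcommVl.
  by apply: Cconj; [apply: CV; apply: P|left; apply: ggenV].
move=> a Aa; apply: (ggen_ind (P := fun y => C (gcomm a y))).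
- by rewrite gcommg1.
- move=> y1 y2 _ By2 P1 P2; rewrite gcommMr.
  by apply: CM => //; apply: Cconj => //; right.
- by move=> y By P; rewrite gcommVr; apply: Cconj; [apply: CV|right; apply: ggenV].
- by move=> b Bb; apply: AB.
Qed.

Lemma ggen_morph_div (phi : T -> T) S V :
  (forall x y, phi (gmul x y) = gmul (phi x) (phi y)) -> subgroup V ->
  (forall v x, V v -> ggen S x -> V (gconj v x)) ->
  (forall u, S u -> V (gmul (phi u) (ginv u))) ->
  forall x, ggen S x -> V (gmul (phi x) (ginv x)).
Proof.
move=> phiM [V1 [VM VV]] Vconj.
apply: (ggen_ind (P := fun x => V (gmul (phi x) (ginv x)))).
- by rewrite gmorph1 // ginv1 gmul1.
- move=> x y Sx _ Px Py.
  have -> : gmul (phi (gmul x y)) (ginv (gmul x y)) =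
            gmul (gmul (phi x) (ginv x)) (gconj (gmul (phi y) (ginv y)) (ginv x)).
    by rewrite phiM /gconj; gsimpl.
  by apply: VM => //; apply: Vconj => //; apply: ggenV.
- move=> x Sx Px.
  have -> : gmul (phi (ginv x)) (ginv (ginv x)) =
            gconj (ginv (gmul (phi x) (ginv x))) x.
    by rewrite (gmorphV phiM) /gconj; gsimpl.
  by apply: Vconj => //; apply: VV.
Qed.

End Generated.

Lemma ggen_morph (T U : grp) (f : U -> T) (S : U -> Prop) (S' : T -> Prop) :
  (forall a b, f (gmul a b) = gmul (f a) (f b)) ->
  (forall b, S b -> ggen S' (f b)) -> forall a, ggen S a -> ggen S' (f a).
Proof.
move=> fM hS; apply: (ggen_subG (H := fun a => ggen S' (f a))) => //; split; [|split].
- by rewrite (gmorph1 fM); apply: ggen1.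
- by move=> a b Sa Sb; rewrite fM; apply: ggenM.
- by move=> a Sa; rewrite (gmorphV fM); apply: ggenV.
Qed.

Section ShiftRecurrences.
Variables (T : grp) (s : T -> T).
Hypothesis sM : forall x y, s (gmul x y) = gmul (s x) (s y).
Implicit Types (S V : T -> Prop) (a x y : T).

Local Notation subgroup := (is_subgrp (@gmul T) (gone T) (@ginv T)).

Definition cycg a : T -> Prop := ggen (fun h => h = a).

Definition shift_span S (m : nat) : T -> Prop :=
  ggen (fun h => exists i, (i <= m)%N /\ exists f, S f /\ h = iter i s f).

Definition rec_mod V (D : nat) a : Prop :=
  exists w v, shift_span (cycg a) D.-1 w /\ V v /\ iter D s a = gmul w v.

Lemma iter_sM k x y : iter k s (gmul x y) = gmul (iter k s x) (iter k s y).
Proof. by elim: k => //= k ->; rewrite sM. Qed.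

Lemma ggen_iter S : (forall y, S y -> S (s y)) ->
  forall k x, ggen S x -> ggen S (iter k s x).
Proof.
move=> Ss k; apply: ggen_morph; first exact: iter_sM.
by move=> y Sy; apply: mem_ggen; elim: k => //= k; apply: Ss.
Qed.

Lemma shift_spanS S m m' x : (m <= m')%N -> shift_span S m x -> shift_span S m' x.
Proof.
move=> le_mm'; apply: ggenS => y [i [le_im Sy]]; apply: mem_ggen.
by exists i; split => //; apply: leq_trans le_mm'.
Qed.

Lemma shift_span_iter S m k x : shift_span S m x -> shift_span S (k + m) (iter k s x).
Proof.
apply: ggen_morph; first exact: iter_sM.
move=> y [i [le_im [f [Sf ->]]]]; apply: mem_ggen.
by exists (k + i)%N; split; [rewrite leq_add2l|exists f; rewrite iterD].
Qed.

Lemma shift_span_cycg m i a : (i <= m)%N -> shift_span (cycg a) m (iter i s a).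
Proof.
by move=> le_im; apply: mem_ggen; exists i; split => //; exists a; split => //; apply: mem_ggen.
Qed.

Lemma shift_span_trans a z k m x :
  shift_span (cycg a) k z -> shift_span (cycg z) m x -> shift_span (cycg a) (k + m) x.
Proof.
move=> span_z; apply: ggenS => y [i [le_im [h [zh ->]]]].
have span_sz : shift_span (cycg a) (k + m) (iter i s z).
  by apply: (shift_spanS (m := (i + k)%N)); [lia|apply: shift_span_iter].
move: h zh; apply: ggen_morph; first exact: iter_sM.
by move=> h ->.
Qed.

Lemma rec_mod_base V D a : subgroup V -> (forall x, V x -> V (iter D s x)) ->
  V a -> rec_mod V D a.
Proof.
move=> [_ [VM VV]] Vs Va; exists a, (gmul (ginv a) (iter D s a)).
split; [exact: (shift_span_cycg (i := 0))|split; last by rewrite gmulKV].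
by apply: VM; [apply: VV|apply: Vs].
Qed.

Lemma rec_mod_step V D k a : (1 <= D)%N -> (1 <= k)%N ->
  (forall v, V v -> V (gconj v (iter D s a))) ->
  rec_mod V D (gmul (iter k s a) (ginv a)) -> rec_mod V (D + k) a.
Proof.
move=> D_gt0 k_gt0 Vconj [w [v [span_w [Vv e]]]].
rewrite iter_sM (gmorphV (iter_sM D)) -iterD in e.
exists (gmul w (iter D s a)), (gconj v (iter D s a)); split; last split.
- apply: ggenM; last by apply: shift_span_cycg; lia.
  have span_b : shift_span (cycg a) k (gmul (iter k s a) (ginv a)).
    apply: ggenM; first exact: shift_span_cycg.
    by apply: ggenV; exact: (shift_span_cycg (i := 0)).
  by apply: (shift_spanS (m := (k + D.-1)%N)); [lia|apply: shift_span_trans span_w].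
- exact: Vconj.
- by rewrite /gconj; gsimpl; rewrite gmulA -e -gmulA gmulV gmul1r.
Qed.

Lemma rec_mod_trans V V' D E a : (1 <= D)%N -> (1 <= E)%N ->
  rec_mod V D a -> (forall v, V v -> rec_mod V' E v) -> rec_mod V' (D + E) a.
Proof.
move=> D_gt0 E_gt0 [w [v [span_w [Vv e]]]] recV.
have span_v : shift_span (cycg a) D v.
  have -> : v = gmul (ginv w) (iter D s a) by rewrite e gmulK.
  apply: ggenM; last exact: shift_span_cycg.
  by apply: ggenV; apply: (shift_spanS (m := D.-1)) => //; lia.
have [w' [v' [span_w' [V'v' e']]]] := recV v Vv.
exists (gmul (iter E s w) w'), v'; split; last split => //.
- apply: ggenM.
    by apply: (shift_spanS (m := (E + D.-1)%N)); [lia|apply: shift_span_iter].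
  by apply: (shift_spanS (m := (D + E.-1)%N)); [lia|apply: shift_span_trans span_w'].
- by rewrite addnC iterD e iter_sM e' gmulA.
Qed.

Lemma rec_mod1 D a : rec_mod (fun v => v = gone T) D a ->
  shift_span (cycg a) D.-1 (iter D s a).
Proof. by move=> [w [v [span_w [-> ->]]]]; rewrite gmul1r. Qed.

End ShiftRecurrences.

Section SequenceGroup.
Variable G : grp.
Implicit Types x y z : nat -> G.

Lemma smulA x y z : smul x (smul y z) = smul (smul x y) z.
Proof. by apply: functional_extensionality => t; rewrite /smul gmulA. Qed.

Lemma smul1 x : smul (sone G) x = x.
Proof. by apply: functional_extensionality => t; rewrite /smul /sone gmul1. Qed.

Lemma smulV x : smul (sinv x) x = sone G.
Proof. by apply: functional_extensionality => t; rewrite /smul /sinv gmulV. Qed.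

Definition omega_grp : grp := Grp smulA smul1 smulV.

End SequenceGroup.

(* Lets [nat -> G] elaborate as the group G^omega, so that gmul, gcomm and
   ggen apply directly to sequences. *)
Canonical omega_grp.

Section Periods.
Variable G : grp.
Implicit Types u v : nat -> G.

Lemma shiftM u v : shift (gmul u v) = gmul (shift u) (shift v).
Proof. by []. Qed.

Lemma iter_shiftE k u t : iter k (@shift G) u t = u (t + k)%N.
Proof. by elim: k t => [|k IH] t; rewrite ?addn0 //= /shift IH addSnnS. Qed.

Lemma period_at_mostW a b u : (a <= b)%N -> period_at_most a u -> period_at_most b u.
Proof. by move=> le_ab [q [le_q uq]]; exists q; split => //; lia. Qed.

Lemma period_at_most_shift k u : period_at_most k u -> period_at_most k (shift u).
Proof. by move=> [q [le_q uq]]; exists q; split => // t; rewrite /shift uq addSn. Qed.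

Lemma periodic_mul (A : Type) (w : nat -> A) q :
  (forall t, w t = w (t + q)%N) -> forall m t, w t = w (t + q * m)%N.
Proof.
move=> wq; elim=> [|m IH] t; first by rewrite muln0 addn0.
by rewrite IH wq mulnS; congr w; lia.
Qed.

Lemma period_at_most_map2 (op : G -> G -> G) a b u v :
  period_at_most a u -> period_at_most b v ->
  period_at_most (a * b) (fun t => op (u t) (v t)).
Proof.
move=> [p [le_p up]] [q [le_q vq]]; exists (p * q)%N; split; first nia.
by move=> t; rewrite (periodic_mul up q t) (periodic_mul vq p t) mulnC.
Qed.

Lemma lcs_comm i (x y : G) : lcs i x -> lcs i.+1 (gcomm x y).
Proof. by move=> x_i; apply: mem_ggen; exists x, y. Qed.

End Periods.

Section Filtration.
Variables (G : grp) (c n : nat).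
Hypothesis lcs_c1 : forall x, lcs c x -> x = gone G.
Implicit Types (u v x y a : nat -> G).

Definition period_bound i := (n.+1 ^ (2 ^ i))%N.

Lemma period_bound_mono i i' : (i <= i')%N -> (period_bound i <= period_bound i')%N.
Proof. by move=> le_ii'; apply: leq_pexp2l => //; apply: leq_pexp2l. Qed.

Lemma period_boundS i : (period_bound i * period_bound i)%N = period_bound i.+1.
Proof. by rewrite /period_bound -expnD expnS mul2n -addnn. Qed.

Definition filt_gen j u : Prop := exists i, (j <= i <= c)%N /\
  (forall t, lcs i (u t)) /\ period_at_most (period_bound i) u.

Definition filt j : omega_grp G -> Prop := ggen (filt_gen j).

Lemma filtW j j' x : (j <= j')%N -> filt j' x -> filt j x.
Proof.
move=> le_jj'; apply: ggenS => u [i [/andP [le_j'i le_ic] gen_u]]; apply: mem_ggen.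
by exists i; split => //; apply/andP; split => //; apply: leq_trans le_j'i.
Qed.

Lemma filt_shift j k x : filt j x -> filt j (iter k (@shift G) x).
Proof.
apply: ggen_iter => // u [i [le_i [lcs_u per_u]]].
by exists i; split => //; split; [move=> t; apply: lcs_u|apply: period_at_most_shift].
Qed.

Lemma filt_trivial j x : (c < j)%N -> filt j x -> x = gone _.
Proof.
move=> lt_cj; apply: (ggen_subG (H := fun y => y = gone _)); first exact: subgroup1.
by move=> u [i [le_i _]]; lia.
Qed.

Lemma comm_lcs_c u v : (forall t, lcs c (u t)) -> gcomm u v = gone _.
Proof.
move=> lcs_u; apply: functional_extensionality => t.
by change (gcomm (u t) (v t) = gone G); rewrite [u t]lcs_c1 ?gcomm1g.
Qed.

Lemma filt_gen_comm_le j i i' u v : (j <= i <= c)%N -> (i' <= i)%N ->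
  (forall t, lcs i (u t)) -> period_at_most (period_bound i) u ->
  (forall t, lcs i' (v t)) -> period_at_most (period_bound i') v ->
  filt j.+1 (gcomm u v).
Proof.
move=> /andP [le_ji le_ic] le_i'i lcs_u per_u lcs_v per_v.
have [lt_ic|] := ltnP i c; last first.
  by move=> le_ci; rewrite comm_lcs_c; [apply: ggen1|have <- : i = c by lia].
apply: mem_ggen; exists i.+1; split; first by apply/andP; split.
split; first by move=> t; apply: lcs_comm.
rewrite -period_boundS; apply: period_at_mostW (period_at_most_map2 (@gcomm G) per_u per_v).
by apply: leq_mul => //; apply: period_bound_mono.
Qed.

Lemma filt_gen_comm j u v : filt_gen j u -> filt_gen 0 v -> filt j.+1 (gcomm u v).
Proof.
move=> [i [le_i [lcs_u per_u]]] [i' [le_i' [lcs_v per_v]]].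
have [le_i'i|lt_ii'] := leqP i' i.
  exact: filt_gen_comm_le le_i le_i'i lcs_u per_u lcs_v per_v.
rewrite -ginv_comm; apply: ggenV.
apply: (filt_gen_comm_le _ _ lcs_v per_v lcs_u per_u); lia.
Qed.

Lemma filt_comm j x : filt j x -> forall y, filt 0 y -> filt j.+1 (gcomm x y).
Proof.
have [d le_d] : exists d, (c.+1 - j <= d)%N by exists (c.+1 - j).
elim: d j le_d x => [|d IH] j le_d x.
  by move=> x_j y _; rewrite (filt_trivial _ x_j) ?gcomm1g; [apply: ggen1|lia].
apply: ggen_comm; [exact: ggen_subgrp| |exact: filt_gen_comm].
move=> v z v_j1 z_0; rewrite gconjE; apply: ggenM => //.
apply: (filtW (j' := j.+2)) => //; apply: (IH j.+1 _ v v_j1); first lia.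
by case: z_0 => // z_j; apply: filtW z_j.
Qed.

Lemma filt_conj j v x : filt j v -> filt 0 x -> filt j (gconj v x).
Proof.
move=> v_j x_0; rewrite gconjE; apply: ggenM => //.
by apply: (filtW (j' := j.+1)) => //; apply: filt_comm.
Qed.

Definition filt_per j k : omega_grp G -> Prop := ggen (fun u =>
  filt_gen j.+1 u \/ (forall t, lcs j (u t)) /\ period_at_most k u).

Lemma filt_per_of_filt j k x : filt j.+1 x -> filt_per j k x.
Proof. by apply: ggenS => u gen_u; apply: mem_ggen; left. Qed.

Lemma filt_of_filt_per j k x : (j <= c)%N -> (k <= period_bound j)%N ->
  filt_per j k x -> filt j x.
Proof.
move=> le_jc le_k; apply: ggenS => u [[i [le_i gen_u]]|[lcs_u per_u]]; apply: mem_ggen.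
  by exists i; split => //; lia.
by exists j; split; [lia|split => //; apply: period_at_mostW per_u].
Qed.

Lemma filt_per0 j x : filt_per j 0 x -> filt j.+1 x.
Proof. by apply: ggenS => u [gen_u|[_ [q [le_q _]]]]; [apply: mem_ggen|lia]. Qed.

Lemma filt_per_of_filt_bound j x : filt j x -> filt_per j (period_bound j) x.
Proof.
apply: ggenS => u [i [le_i [lcs_u per_u]]]; apply: mem_ggen.
have [lt_ji|le_ij] := ltnP j i; first by left; exists i; split => //; lia.
by right; have -> : j = i by lia.
Qed.

Lemma filt_per_shift j k m x : filt_per j k x -> filt_per j k (iter m (@shift G) x).
Proof.
apply: ggen_iter => // u [[i [le_i [lcs_u per_u]]]|[lcs_u per_u]].
  by left; exists i; split => //; split; [move=> t; apply: lcs_u|apply: period_at_most_shift].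
by right; split; [move=> t; apply: lcs_u|apply: period_at_most_shift].
Qed.

Lemma filt_per_conj j k v x : (j <= c)%N -> (k <= period_bound j)%N ->
  filt_per j k v -> filt 0 x -> filt_per j k (gconj v x).
Proof.
move=> le_jc le_k v_jk x_0; rewrite gconjE; apply: ggenM => //.
by apply: filt_per_of_filt; apply: filt_comm x_0; apply: filt_of_filt_per v_jk.
Qed.

(* A generator of period q <= k is fixed by the k-th shift if q = k, and lies
   in filt_per j k.-1 otherwise. *)
Lemma filt_per_diff j k a : (j <= c)%N -> (0 < k <= period_bound j)%N ->
  filt_per j k a -> filt_per j k.-1 (gmul (iter k (@shift G) a) (ginv a)).
Proof.
move=> le_jc /andP [k_gt0 le_k]; apply: ggen_morph_div.
- exact: iter_sM.
- exact: ggen_subgrp.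
- move=> v x v_jk x_jk; apply: filt_per_conj => //; first lia.
  by apply: (filtW (j' := j)) => //; apply: filt_of_filt_per x_jk.
move=> u [gen_u|[lcs_u [q [le_q uq]]]].
  apply: filt_per_of_filt; apply: ggenM; last by apply: ggenV; apply: mem_ggen.
  by apply: filt_shift; apply: mem_ggen.
have [lt_qk|le_kq] := ltnP q k.
  have u_jk1 : filt_per j k.-1 u.
    by apply: mem_ggen; right; split => //; exists q; split => //; lia.
  by apply: ggenM; [apply: filt_per_shift|apply: ggenV].
have -> : iter k (@shift G) u = u.
  have -> : k = q by lia.
  by apply: functional_extensionality => t; rewrite iter_shiftE -uq.
by rewrite gmulVr; apply: ggen1.
Qed.

Lemma rec_filt_per j k a D : (j <= c)%N -> (k <= period_bound j)%N ->
  filt_per j k a -> (1 + k * k <= D)%N -> rec_mod (@shift G) (filt j.+1) D a.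
Proof.
move=> le_jc; elim: k a D => [|k IH] a D le_k a_jk le_D.
  apply: rec_mod_base; [exact: ggen_subgrp|exact: filt_shift|exact: filt_per0].
have -> : D = (D - k.+1 + k.+1)%N by nia.
apply: rec_mod_step; [exact: shiftM|nia|by []| |].
  move=> v v_j1; apply: (filt_conj v_j1); apply: filt_shift.
  by apply: (filtW (j' := j)) => //; apply: filt_of_filt_per a_jk.
apply: IH; [lia| |nia].
by apply: filt_per_diff a_jk => //; rewrite le_k.
Qed.

Lemma rec_filt j a : (j <= c.+1)%N -> filt j a ->
  rec_mod (@shift G) (fun v => v = gone _) ((c.+2 - j) * (1 + period_bound c.+1)) a.
Proof.
have [d e_d] : exists d, d = (c.+1 - j)%N by eexists.
elim: d j e_d a => [|d IH] j e_d a le_j a_j.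
  have -> : j = c.+1 by lia.
  rewrite subSnn mul1n (filt_trivial _ a_j); last lia.
  apply: rec_mod_base => //; first exact: subgroup1.
  by move=> x ->; apply: gmorph1; apply: iter_sM.
have le_jc : (j <= c)%N by lia.
have -> : ((c.+2 - j) * (1 + period_bound c.+1) =
    1 + period_bound c.+1 + (c.+2 - j.+1) * (1 + period_bound c.+1))%N.
  by rewrite -mulSn; congr muln; lia.
apply: (@rec_mod_trans _ _ (@shiftM G) (filt j.+1)); [lia|nia| |].
  apply: (rec_filt_per (k := period_bound j)) => //; first exact: filt_per_of_filt_bound.
  by rewrite period_boundS leq_add2l period_bound_mono.
by move=> v v_j1; apply: IH => //; lia.
Qed.

End Filtration.

Import GRing.Theory.
Local Open Scope ring_scope.

Theorem mainTheorem12 (G : grp) :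
  finitely_generated G -> nilpotent G ->
  exists p : {poly rat}, forall (n : nat) (f : nat -> G),
    Gomega n f ->
    exists d : nat, p.[n%:R] = d%:R /\ satisfies_recurrence d f.
Proof.
move=> _ [c lcs_c1].
exists ((1 + ('X + 1) ^+ (2 ^ c.+1)) *+ c.+2) => n f f_n.
exists (c.+2 * (1 + period_bound n c.+1))%N; split.
  by rewrite hornerMn !hornerE natr1 natrM natrD natrX mulr_natl.
have f_0 : filt c n 0 f.
  apply: ggenS f_n => u per_u; apply: mem_ggen; exists 0%N; split => //; split => //.
  by apply: period_at_mostW per_u; rewrite /period_bound expn1.
split; first by rewrite muln_gt0 addn_gt0.
by have := rec_filt lcs_c1 (leq0n _) f_0; rewrite subn0 => /rec_mod1.
Qed.
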